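(* Consider the redundancy system with $N$ parallel servers and $d\le N$ replicas per job described in the context. Let $\boldsymbol{\omega}=(\omega_1,\dots,\omega_N)$ be a workload state and let $\omega_{(1)}\ge\omega_{(2)}\ge\dots\ge\omega_{(N)}$ denote its ordered values. If $\omega_{(1)}=\omega_{(2)}=\dots=\omega_{(d)}$, then every future workload state $\boldsymbol{\omega}_{\mathrm{new}}$ also satisfies $\omega_{\mathrm{new},(1)}=\dots=\omega_{\mathrm{new},(d)}$. That is, once the $d$ largest workloads are equal, they remain equal forever.
   Context: System: $N$ parallel servers; jobs arrive according to a Poisson process of rate $\lambda$. Each arriving job is replicated into $d$ replicas ($1\le d\le N$), which are sent to $d$ distinct servers chosen uniformly at random without replacement. Replicas are served first-come-first-served at each server; a job is completed as soon as the first of its replicas completes service, at which moment the other $d-1$ replicas are instantaneously abandoned (cancel-on-completion). The service requirements of the $d$ replicas are i.i.d. copies of a nonnegative random variable $B$ (independent across jobs). The workload $\omega_i$ of server $i$ is the real amount of work server $i$ must perform to become idle in the absence of further arrivals; between arrivals each positive workload decreases at unit rate. If a job arrives with sampled servers $s_1,\dots,s_d$ and realized replica requirements $b_1,\dots,b_d$, then the new workload at server $s_l$ is $\max\{\min_{j\in\{1,\dots,d\}}(\omega_{s_j}+b_j),\ \omega_{s_l}\}$ for $l=1,\dots,d$, and the workloads of the other servers are unchanged. *)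

From HB Require Import structures.
From mathcomp Require Import all_boot all_order all_algebra.
Set Implicit Arguments. Unset Strict Implicit. Unset Printing Implicit Defensive.
Import Order.TTheory GRing.Theory Num.Theory.
Local Open Scope ring_scope.

(* k-th largest workload (0-indexed): omega_(k+1) in the paper's notation. *)
Definition ord_stat (R : realDomainType) (N : nat) (w : 'I_N -> R) (k : nat) : R :=
  nth 0 (sort (fun x y : R => y <= x) [seq w i | i <- enum 'I_N]) k.

Definition top_equal (R : realDomainType) (N d : nat) (w : 'I_N -> R) : Prop :=
  forall k : nat, (k < d)%N -> ord_stat w k = ord_stat w 0.

Inductive step (R : realDomainType) (N d : nat) : ('I_N -> R) -> ('I_N -> R) -> Prop :=
  (* elapse of time t >= 0 without arrivals: positive workloads decrease at unit rate *)
  | step_drift (w : 'I_N -> R) (t : R) :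
      0 <= t -> step d w (fun i => Num.max (w i - t) 0)
  (* arrival of a job replicated to d distinct servers s with requirements b *)
  | step_arrival (w : 'I_N -> R) (s : 'I_d -> 'I_N) (b : 'I_d -> R) (j0 : 'I_d) :
      injective s -> (forall j, 0 <= b j) ->
      step d w (fun i =>
        if [exists l, s l == i]
        then Num.max (\big[Num.min/(w (s j0) + b j0)]_(j < d) (w (s j) + b j)) (w i)
        else w i).

Inductive reachable (R : realDomainType) (N d : nat) (w : 'I_N -> R) : ('I_N -> R) -> Prop :=
  | reach_refl : reachable d w w
  | reach_step (w1 w2 : 'I_N -> R) : reachable d w w1 -> step d w1 w2 -> reachable d w w2.

(* The d largest workloads are equal exactly when the maximal workload is
   attained by at least d servers, and this property is preserved by every
   transition.  A drift applies the nondecreasing map x |-> max (x - t) 0 to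
   all workloads, which keeps maximisers maximisers.  An arrival raises the d
   sampled servers to at least m, the minimum of the replica completion
   times: if m exceeds the current maximum M, those d servers become the new
   tied maximum m; otherwise no workload passes M and every server at M stays
   there.  Neither the workloads nor the service requirements need to be
   nonnegative for this. *)
From mathcomp Require Import all_boot all_order all_algebra.
Import Order.TTheory GRing.Theory Num.Theory.
Local Open Scope ring_scope.

Section SortedDecreasing.
Variables (R : realDomainType) (s : seq R).
Hypothesis s_sorted : sorted >=%O s.

Lemma sorted_ge_nth k j : (k <= j < size s)%N -> nth 0 s j <= nth 0 s k.
Proof.
case/andP=> le_kj lt_js.
apply: (sorted_leq_nth ge_trans lexx) => //.
by rewrite inE (leq_ltn_trans le_kj).
Qed.

(* Past the first entry below the head, every entry is below the head. *)
Lemma sorted_head_repeated (d : nat) : (d <= size s)%N ->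
  (forall k, (k < d)%N -> nth 0 s k = nth 0 s 0) <->
  (d <= count (pred1 (nth 0%R s 0)) s)%N.
Proof.
move=> le_ds; set x := nth 0 s 0.
split=> [top_eq | count_x k lt_kd].
  have size_take_d : size (take d s) = d by rewrite size_takel.
  have : all (pred1 x) (take d s).
    apply/(all_nthP 0) => k; rewrite size_take_d => lt_kd.
    by rewrite nth_take //= top_eq.
  rewrite all_count size_take_d => /eqP <-.
  by rewrite -{2}(cat_take_drop d s) count_cat leq_addr.
apply/eqP/negPn/negP => neq_kx.
have lt_ks : (k < size s)%N by apply: leq_trans le_ds.
have lt_kx : nth 0 s k < x by rewrite lt_neqAle neq_kx sorted_ge_nth.
have drop_no_x : count (pred1 x) (drop k s) = 0%N.
  apply/eqP; rewrite -leqn0 leqNgt -has_count; apply/hasPn => y.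
  case/(nthP 0) => j; rewrite size_drop nth_drop => lt_j <- /=.
  have le_jk : nth 0 s (k + j) <= nth 0 s k.
    by rewrite sorted_ge_nth // leq_addr -ltn_subRL.
  by rewrite lt_eqF // (le_lt_trans le_jk).
move: count_x; rewrite -(cat_take_drop k s) count_cat drop_no_x addn0.
have := count_size (pred1 x) (take k s).
rewrite size_takel ?(ltnW lt_ks) // => le_k.
by move=> /leq_trans /(_ le_k); rewrite leqNgt lt_kd.
Qed.

End SortedDecreasing.

Definition tied_max (R : realDomainType) (N d : nat) (w : 'I_N -> R) : Prop :=
  exists2 M, forall i, w i <= M & (d <= #|[pred i | w i == M]|)%N.
Arguments tied_max {R N} d w.

Section OrderStatistics.
Variables (R : realDomainType) (N : nat) (w : 'I_N -> R).

Let ws := sort >=%O [seq w i | i <- enum 'I_N].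

Lemma ord_stat_sorted : sorted >=%O ws.
Proof. exact/sort_sorted/ge_total. Qed.

Lemma size_ord_stat : size ws = N.
Proof. by rewrite size_sort size_map size_enum_ord. Qed.

Lemma mem_ord_stat y : (y \in ws) = (y \in [seq w i | i <- enum 'I_N]).
Proof. exact/perm_mem/permEl/perm_sort. Qed.

Lemma count_ord_stat y : count (pred1 y) ws = #|[pred i | w i == y]|.
Proof.
rewrite (permP (permEl (perm_sort _ _))) count_map.
by rewrite enumT cardE /enum_mem size_filter.
Qed.

Lemma ord_stat0_ge i : w i <= ord_stat w 0.
Proof.
have : w i \in ws by rewrite mem_ord_stat map_f ?mem_enum.
by case/(nthP 0) => j lt_j <-; apply: sorted_ge_nth ord_stat_sorted _ _ _.
Qed.

Lemma ord_stat0_attained : (0 < N)%N -> exists i, w i = ord_stat w 0.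
Proof.
move=> N_gt0; have : ord_stat w 0 \in ws by rewrite mem_nth ?size_ord_stat.
by rewrite mem_ord_stat => /mapP [i _ ->]; exists i.
Qed.

Lemma tied_maxE {d} : (0 < d)%N ->
  tied_max d w <-> (d <= #|[pred i | w i == ord_stat w 0]|)%N.
Proof.
move=> d_gt0; split=> [[M le_wM tied_M] | tied0]; last first.
  by exists (ord_stat w 0) => //; apply: ord_stat0_ge.
have [i /eqP wi_M] : exists i, i \in [pred i | w i == M].
  by apply/card_gt0P; apply: leq_trans tied_M.
suff -> : ord_stat w 0 = M by [].
apply/eqP; rewrite eq_le -{2}wi_M ord_stat0_ge andbT.
have [|j <-] := ord_stat0_attained; last exact: le_wM.
by rewrite -(card_ord N) (leq_trans d_gt0) // (leq_trans tied_M) ?max_card.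
Qed.

Lemma top_equal_tied_max d : (0 < d)%N -> (d <= N)%N ->
  top_equal d w <-> tied_max d w.
Proof.
move=> d_gt0 le_dN.
have top_count : top_equal d w <-> (d <= #|[pred i | w i == ord_stat w 0]|)%N.
  rewrite -count_ord_stat; apply: sorted_head_repeated; first exact: ord_stat_sorted.
  by rewrite size_ord_stat.
exact: iff_trans top_count (iff_sym (tied_maxE d_gt0)).
Qed.

End OrderStatistics.
Arguments top_equal_tied_max {R N w d}.

Section TiedMaxInvariance.
Variables (R : realDomainType) (N d : nat).
Implicit Types (w : 'I_N -> R).

Lemma tied_max_homo (f : R -> R) w : {homo f : x y / x <= y} ->
  tied_max d w -> tied_max d (f \o w).
Proof.
move=> f_homo [M le_wM tied_M]; exists (f M) => [i|]; first exact: f_homo.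
apply: leq_trans tied_M _; apply/subset_leq_card/subsetP => i.
by rewrite !inE => /eqP /= ->.
Qed.

Lemma tied_max_raise (S : pred 'I_N) (m : R) w : (d <= #|S|)%N ->
  tied_max d w -> tied_max d (fun i => if S i then Num.max m (w i) else w i).
Proof.
move=> le_dS [M le_wM tied_M].
have [le_Mm | lt_mM] := leP M m.
  have le_wm i : w i <= m by apply: le_trans (le_wM i) le_Mm.
  exists m => [i|]; first by case: ifP => _; rewrite ?ge_max ?lexx le_wm.
  apply: leq_trans le_dS _; apply/subset_leq_card/subsetP => i.
  by rewrite inE => Si; rewrite (Si : S i) max_l.
exists M => [i|]; first by case: ifP => _; rewrite ?ge_max ?(ltW lt_mM) le_wM.
apply: leq_trans tied_M _; apply/subset_leq_card/subsetP => i.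
by rewrite !inE => /eqP wi_M; case: ifP; rewrite wi_M // max_r // ltW.
Qed.

Lemma step_tied_max w w' : step d w w' -> tied_max d w -> tied_max d w'.
Proof.
case=> {w w'} [w t _ | w s b j0 inj_s _].
  apply: (@tied_max_homo (fun x => Num.max (x - t) 0)) => x y le_xy.
  by apply: le_max2; rewrite ?lerD2r.
apply: tied_max_raise.
rewrite -[X in (X <= _)%N]card_ord -(card_codom inj_s).
apply/subset_leq_card/subsetP => _ /codomP [l ->].
by apply/existsP; exists l.
Qed.

Lemma reachable_tied_max w w' : reachable d w w' -> tied_max d w -> tied_max d w'.
Proof.
move=> reach tied_w; elim: reach => // w1 w2 _ tied_w1 step_w12.
exact: step_tied_max step_w12 tied_w1.
Qed.

End TiedMaxInvariance.

Theorem mainTheorem1 (R : realDomainType) (N d : nat) (w : 'I_N -> R) :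
  (1 <= d)%N -> (d <= N)%N -> (forall i, 0 <= w i) ->
  top_equal d w ->
  forall w_new : 'I_N -> R, reachable d w w_new -> top_equal d w_new.
Proof.
move=> d_gt0 le_dN _ /(top_equal_tied_max d_gt0 le_dN) tied_w w_new reach.
apply/(top_equal_tied_max d_gt0 le_dN).
exact: reachable_tied_max reach tied_w.
Qed.
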